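(* For an integer $n\ge1$, let $\mathcal{G}^{\mathrm{tree}}_{n,1}$ be the directed tree with unit edge weights consisting of a root node and two branches: a directed path of $n$ edges from a leaf $k$ to the root and a single edge from a leaf $j$ to the root (so it has $n+2$ nodes). Then the effective resistance between its two leaves is $$r(n,1)=2(n-1)+2^{2-n}.$$
   Context: For a directed graph with nonnegative adjacency matrix $A=[a_{i,j}]$ ($a_{i,j}>0$ iff there is an edge from $i$ to $j$), let $D$ be the diagonal matrix of out-degrees $d_k=\sum_j a_{k,j}$ and $L=D-A$. For a connected graph (one with a node reachable from every node) on $N$ nodes, let $\Pi=I_N-\frac1N\mathbf{1}_N\mathbf{1}_N^T$, $Q\in\mathbb{R}^{(N-1)\times N}$ with $Q\mathbf{1}_N=0$, $QQ^T=I_{N-1}$, $Q^TQ=\Pi$; $\overline L=QLQ^T$; $\Sigma$ the unique solution of $\overline L\Sigma+\Sigma\overline L^T=I_{N-1}$; $X=2Q^T\Sigma Q$; and the effective resistance $r_{k,j}=x_{k,k}+x_{j,j}-2x_{k,j}$. More generally, for integers $n,m\ge1$, $\mathcal{G}^{\mathrm{tree}}_{n,m}$ denotes the unit-weight directed tree with $n+m+1$ nodes formed by a directed path of $n$ edges from one leaf to a root and a directed path of $m$ edges from another leaf to the same root, and $r(n,m)$ denotes the effective resistance between its two leaves. *)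

From HB Require Import structures.
From mathcomp Require Import all_boot all_order all_algebra.
Set Implicit Arguments. Unset Strict Implicit. Unset Printing Implicit Defensive.
Import Order.TTheory GRing.Theory Num.Theory.
Local Open Scope ring_scope.

Definition laplacian (R : comRingType) (N : nat) (A : 'M[R]_N) : 'M[R]_N :=
  diag_mx (\row_k (\sum_j A k j)) - A.

Definition proj_basis (R : fieldType) (N : nat) (Q : 'M[R]_(N, N.+1)) : Prop :=
  [/\ Q *m (const_mx 1 : 'cV[R]_(N.+1)) = 0,
      Q *m Q^T = 1%:M &
      Q^T *m Q = 1%:M - (N.+1)%:R^-1 *: (const_mx 1 : 'M[R]_(N.+1))].

Definition red_laplacian (R : comRingType) (N : nat) (Q : 'M[R]_(N, N.+1))
  (A : 'M[R]_(N.+1)) : 'M[R]_N := Q *m laplacian A *m Q^T.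

Definition lyap_sol (R : comRingType) (N : nat) (Lb Sigma : 'M[R]_N) : Prop :=
  Lb *m Sigma + Sigma *m Lb^T = 1%:M.

Definition Xmat (R : comRingType) (N : nat) (Q : 'M[R]_(N, N.+1)) (Sigma : 'M[R]_N)
  : 'M[R]_(N.+1) := 2%:R *: (Q^T *m Sigma *m Q).

Definition eff_res (R : comRingType) (N : nat) (Q : 'M[R]_(N, N.+1)) (Sigma : 'M[R]_N)
  (k j : 'I_(N.+1)) : R :=
  let X := Xmat Q Sigma in X k k + X j j - 2%:R * X k j.

(* Unit-weight directed tree G^tree_{n,m} on nodes 0 .. n+m:
   path 0 -> 1 -> ... -> n (leaf k = 0, root = n), and
   path n+m -> n+m-1 -> ... -> n+1 -> n (leaf j = n+m).
   a_{i,j} = 1 iff there is an edge from i to j. *)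
Definition tree_adj (R : nzRingType) (n m : nat) : 'M[R]_((n + m).+1) :=
  \matrix_(i, j) ((((i < n)%N && (j == i.+1 :> nat)) ||
                  ((n < i)%N && (j == i.-1 :> nat))) : bool)%:R.

Definition leaf_k (n m : nat) : 'I_((n + m).+1) := ord0.
Definition leaf_j (n m : nat) : 'I_((n + m).+1) := ord_max.

(* Write B(v,w) = v^T X w for the bilinear form of X = 2 Q^T Sigma Q and call
   a vector balanced when its entries sum to zero.  Conjugating the Lyapunov
   equation  Lbar Sigma + Sigma Lbar^T = I  by Q shows that, on balanced
   vectors,
          B(L^T v, w) + B(v, L^T w) = 2 <v, w>                      (Lyap)
   and that X^T satisfies (Lyap) as well.  For the tree, L^T acts on the
   balanced vectors d_a = e_a - e_n (a <= n, n the root) and s = e_{n+1} - e_n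
   by  L^T d_a = d_a - d_{a+1}  and  L^T s = s, so (Lyap) becomes a system of
   recurrences whose unique solution is
     B(s,s) = 2,  B(d_a,s) = 2 - 2^(1-(n-a)),  B(d_a,d_b) = 2 (n - max a b).
   These values are symmetric and hold for X^T as well; since X = Pi X Pi, this
   forces X^T = X, hence
     r = B(d_0 - s, d_0 - s) = 2n - 2 (2 - 2^(1-n)) + 2 = 2(n-1) + 2^(2-n). *)
From HB Require Import structures.
From mathcomp Require Import all_boot all_order all_algebra.
From mathcomp Require Import ring lra zify.
Import Order.TTheory GRing.Theory Num.Theory.
Local Open Scope ring_scope.
Set Implicit Arguments. Unset Strict Implicit. Unset Printing Implicit Defensive.

Definition ev {R : nzRingType} {N : nat} (x : nat) : 'cV[R]_N :=
  \col_i ((i : nat) == x)%:R.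

Lemma sum_ev (R : nzRingType) N x : (x < N)%N ->
  \sum_(i < N) (((i : nat) == x)%:R : R) = 1.
Proof.
move=> hx; rewrite (bigD1 (Ordinal hx)) //= eqxx big1 ?addr0 // => i hi.
case: eqP => // e; case/negP: hi; apply/eqP; exact: val_inj.
Qed.

Lemma mulmx_ev (R : nzRingType) p N (M : 'M[R]_(p, N)) x (hx : (x < N)%N) i :
  (M *m ev x) i 0 = M i (Ordinal hx).
Proof.
rewrite mxE (bigD1 (Ordinal hx)) //= mxE eqxx mulr1 big1 ?addr0 // => j hj.
rewrite mxE; case: eqP => [e|]; last by rewrite mulr0.
case/negP: hj; apply/eqP; exact: val_inj.
Qed.

Definition Bf {R : nzRingType} {N : nat} (X : 'M[R]_N) (v w : 'cV[R]_N) : R :=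
  (v^T *m X *m w) 0 0.

Lemma BfBl (R : comNzRingType) N (X : 'M[R]_N) v1 v2 w :
  Bf X (v1 - v2) w = Bf X v1 w - Bf X v2 w.
Proof. by rewrite /Bf raddfB /= !mulmxBl [LHS]mxE [X in _ + X]mxE. Qed.

Lemma BfBr (R : comNzRingType) N (X : 'M[R]_N) v w1 w2 :
  Bf X v (w1 - w2) = Bf X v w1 - Bf X v w2.
Proof. by rewrite /Bf !mulmxBr [LHS]mxE [X in _ + X]mxE. Qed.

Lemma Bf0l (R : comNzRingType) N (X : 'M[R]_N) w : Bf X 0 w = 0.
Proof. by rewrite /Bf trmx0 !mul0mx mxE. Qed.

Lemma Bf0r (R : comNzRingType) N (X : 'M[R]_N) v : Bf X v 0 = 0.
Proof. by rewrite /Bf !mulmx0 mxE. Qed.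

Lemma Bf_tr (R : comNzRingType) N (X : 'M[R]_N) v w : Bf X^T v w = Bf X w v.
Proof.
rewrite /Bf; have -> : v^T *m X^T *m w = (w^T *m X *m v)^T by rewrite !trmx_mul !trmxK mulmxA.
by rewrite mxE.
Qed.

Lemma Bf_ev (R : comNzRingType) N (M : 'M[R]_N) (i j : 'I_N) :
  Bf M (ev i) (ev j) = M i j.
Proof.
rewrite /Bf mulmx_ev mxE (bigD1 i) //= !mxE eqxx mul1r big1 ?addr0.
- by congr (M _ _); apply: val_inj.
- move=> k hk; rewrite !mxE; case: eqP => [/val_inj ek|_]; last by rewrite mul0r.
  by rewrite ek eqxx in hk.
Qed.

Lemma dot_ev (R : comNzRingType) N x y (hx : (x < N)%N) (hy : (y < N)%N) :
  Bf (1%:M : 'M[R]_N) (ev x) (ev y) = (x == y)%:R.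
Proof.
have -> : ev x = ev (Ordinal hx) :> 'cV[R]_N by [].
have -> : ev y = ev (Ordinal hy) :> 'cV[R]_N by [].
by rewrite Bf_ev mxE.
Qed.

Definition balanced {R : nzRingType} {N : nat} (v : 'cV[R]_N) := \sum_i v i 0 = 0.

Lemma balanced_ev (R : comNzRingType) N x y : (x < N)%N -> (y < N)%N ->
  balanced (ev x - ev y : 'cV[R]_N).
Proof.
move=> hx hy; rewrite /balanced.
under eq_bigr do rewrite !mxE.
by rewrite sumrB !sum_ev // subrr.
Qed.

Lemma proj_balanced (R : fieldType) N (Q : 'M[R]_(N, N.+1)) u :
  proj_basis Q -> balanced u -> Q^T *m Q *m u = u.
Proof.
case=> _ _ -> hu; rewrite mulmxBl mul1mx -scalemxAl.
suff -> : (const_mx 1 : 'M[R]_N.+1) *m u = 0 by rewrite scaler0 subr0.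
apply/matrixP => i j; rewrite ord1 !mxE -[RHS]hu.
by apply: eq_bigr => k _; rewrite mxE mul1r.
Qed.

Definition lyap_identity (R : comNzRingType) N (L X : 'M[R]_N) : Prop :=
  forall v w, balanced v -> balanced w ->
  Bf X (L^T *m v) w + Bf X v (L^T *m w) = 2 * Bf 1%:M v w.

Lemma lyap_identity_tr (R : comNzRingType) N (L X : 'M[R]_N) :
  lyap_identity L X -> lyap_identity L X^T.
Proof.
move=> hX v w hv hw; rewrite !Bf_tr addrC hX //.
by rewrite -[1%:M]trmx1 Bf_tr trmx1.
Qed.

(* Conjugating the Lyapunov equation by Q yields (Lyap) for X = 2 Q^T Sigma Q. *)
Lemma lyap_identity_of_sol (R : fieldType) N (Q : 'M[R]_(N, N.+1)) Sigma A :
  proj_basis Q -> lyap_sol (red_laplacian Q A) Sigma ->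
  lyap_identity (laplacian A) (Xmat Q Sigma).
Proof.
move=> hQ; rewrite /lyap_sol /red_laplacian; move: (laplacian A) => L hL v w hv hw.
have vP : v^T *m Q^T *m Q = v^T.
  by have := congr1 trmx (proj_balanced hQ hv); rewrite !trmx_mul trmxK mulmxA.
have wP p (M : 'M[R]_(p, N.+1)) : M *m Q^T *m Q *m w = M *m w.
  by rewrite -!mulmxA (mulmxA Q^T) proj_balanced.
rewrite /Bf mulmx1.
have := congr1 (fun M => (v^T *m Q^T *m M *m Q *m w) 0 0) hL.
rewrite /= mulmx1 vP !trmx_mul !trmxK !mulmxDr !mulmxDl !mulmxA vP wP mxE => <-.
rewrite /Xmat -!scalemxAr -!scalemxAl !mulmxA !mxE.
by rewrite -mulrDr.
Qed.

Lemma Xmat_proj (R : fieldType) N (Q : 'M[R]_(N, N.+1)) Sigma :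
  proj_basis Q -> Q^T *m Q *m Xmat Q Sigma *m (Q^T *m Q) = Xmat Q Sigma.
Proof.
case=> _ QQt _; rewrite /Xmat -scalemxAr -scalemxAl; congr (_ *: _).
by rewrite !mulmxA -(mulmxA Q^T) QQt mulmx1 -(mulmxA _ Q Q^T) QQt mulmx1.
Qed.

(* A Pi-invariant matrix is symmetric as soon as its form is symmetric on the
   differences e_i - e_r, which span the balanced vectors. *)
Lemma sym_of_sym_on_diffs (R : fieldType) N (Q : 'M[R]_(N, N.+1))
    (X : 'M[R]_N.+1) (r : nat) :
  proj_basis Q -> Q^T *m Q *m X *m (Q^T *m Q) = X ->
  (forall i j : 'I_N.+1,
     Bf X (ev i - ev r) (ev j - ev r) = Bf X (ev j - ev r) (ev i - ev r)) ->
  X^T = X.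
Proof.
case=> Q1 _ _; set P := Q^T *m Q => XP hsym.
pose H : 'M[R]_N.+1 := 1%:M - ev r *m (const_mx 1 : 'rV[R]_N.+1).
have HP : H *m P = P.
  have c0 : (const_mx 1 : 'rV[R]_N.+1) *m Q^T = 0.
    by rewrite -[const_mx 1]trmx_const -trmx_mul Q1 trmx0.
  by rewrite mulmxBl mul1mx -mulmxA (mulmxA (const_mx 1)) c0 mul0mx mulmx0 subr0.
have Hev (i : 'I_N.+1) : H *m ev i = ev i - ev r.
  rewrite mulmxBl mul1mx -mulmxA.
  suff -> : (const_mx 1 : 'rV[R]_N.+1) *m ev i = 1%:M by rewrite mulmx1.
  by apply/matrixP => a b; rewrite !ord1 mulmx_ev !mxE.
have PT : P^T = P by rewrite trmx_mul trmxK.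
pose K := H^T *m X *m H.
have XK : X = P^T *m K *m P.
  have : X = (H *m P)^T *m X *m (H *m P) by rewrite HP PT; exact: esym XP.
  by rewrite trmx_mul !mulmxA.
have KT : K^T = K.
  apply/matrixP => i j; rewrite mxE -!Bf_ev /Bf /K !mulmxA -!mulmxA !Hev.
  by rewrite !mulmxA -!trmx_mul !Hev; exact: hsym.
rewrite {1}XK trmx_mul (trmx_mul P^T K) KT trmxK mulmxA; exact: esym XK.
Qed.

Lemma eff_res_form (R : comNzRingType) N (X : 'M[R]_N) (k j : 'I_N) :
  X^T = X -> X k k + X j j - 2%:R * X k j = Bf X (ev k - ev j) (ev k - ev j).
Proof.
move=> XT; have Xjk : X j k = X k j by rewrite -{1}XT mxE.
by rewrite !(BfBl, BfBr) !Bf_ev Xjk mulr2n mulrDl mul1r opprD; ring.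
Qed.

Lemma tree_laplacianT_ev (R : comNzRingType) n m x (hx : (x < (n + m).+1)%N) :
  (laplacian (tree_adj R n m))^T *m ev x =
  if (x < n)%N then ev x - ev x.+1 else if x == n then 0 else ev x - ev x.-1.
Proof.
apply/matrixP => i j; rewrite ord1 {j} mulmx_ev /laplacian !mxE /=.
under eq_bigr do rewrite mxE /=.
rewrite -val_eqE /=.
case: (ltnP x n) => hxn.
  rewrite (_ : (n < x)%N = false) /=; last by lia.
  under eq_bigr do rewrite orbF.
  by rewrite sum_ev; [rewrite orbF !mxE eq_sym | lia].
have [->|hne] := eqVneq x n; first by rewrite ltnn big1 // mxE mul0rn subr0.
rewrite (_ : (n < x)%N) /= ?sum_ev; try lia.
by rewrite !mxE eq_sym.
Qed.

Section TreeForm.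
Variable R : realFieldType.
Variable n : nat.
Local Notation N := ((n + 1).+1).
Local Notation L := (laplacian (tree_adj R n 1)).

(* The balanced vectors d_a = e_a - e_n along the long branch and
   s = e_{n+1} - e_n for the short one; locked so that rewriting with the
   bilinearity lemmas does not unfold them. *)
Fact tree_vec_key : unit. Proof. exact: tt. Qed.
Definition dd (a : nat) : 'cV[R]_N := locked_with tree_vec_key (ev a - ev n).
Definition ss : 'cV[R]_N := locked_with tree_vec_key (ev n.+1 - ev n).
Lemma ddE a : dd a = ev a - ev n. Proof. by rewrite /dd locked_withE. Qed.
Lemma ssE : ss = ev n.+1 - ev n. Proof. by rewrite /ss locked_withE. Qed.

Lemma dd_root : dd n = 0. Proof. by rewrite ddE subrr. Qed.
Lemma balanced_dd a : (a <= n)%N -> balanced (dd a).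
Proof. by move=> ha; rewrite ddE; apply: balanced_ev; lia. Qed.
Lemma balanced_ss : balanced ss.
Proof. by rewrite ssE; apply: balanced_ev; lia. Qed.

Lemma LT_dd a : (a < n)%N -> L^T *m dd a = dd a - dd a.+1.
Proof.
move=> ha; rewrite !ddE mulmxBr !tree_laplacianT_ev; try lia.
by rewrite ha ltnn eqxx subr0 opprB addrA subrK.
Qed.

Lemma LT_ss : L^T *m ss = ss.
Proof.
rewrite ssE mulmxBr !tree_laplacianT_ev; try lia.
have -> : (n.+1 < n)%N = false by lia.
have -> : (n.+1 == n) = false by lia.
by rewrite ltnn eqxx subr0.
Qed.

Lemma dot_ss : Bf 1%:M ss ss = 2.
Proof.
rewrite ssE !(BfBl, BfBr) !dot_ev ?eqxx; try lia.
have -> : (n.+1 == n) = false by lia.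
have -> : (n == n.+1) = false by lia.
by rewrite /=; lra.
Qed.

Lemma dot_ds a : (a < n)%N -> Bf 1%:M (dd a) ss = 1.
Proof.
move=> ha; rewrite ssE ddE !(BfBl, BfBr) !dot_ev ?eqxx; try lia.
have -> : (n == n.+1) = false by lia.
have -> : (a == n.+1) = false by lia.
have -> : (a == n) = false by lia.
by rewrite /=; lra.
Qed.

Lemma dot_dd a b : (a < n)%N -> (b < n)%N ->
  Bf 1%:M (dd a) (dd b) = (a == b)%:R + 1.
Proof.
move=> ha hb; rewrite !ddE !(BfBl, BfBr) !dot_ev ?eqxx; try lia.
have -> : (n == b) = false by lia.
have -> : (a == n) = false by lia.
by rewrite /=; lra.
Qed.

Variable X : 'M[R]_N.
Hypothesis hX : lyap_identity L X.

Lemma form_ss : Bf X ss ss = 2.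
Proof. by have := hX balanced_ss balanced_ss; rewrite LT_ss dot_ss => h; lra. Qed.

(* (Lyap) on (d_a, s) gives B(d_a,s) = (2 + B(d_{a+1},s)) / 2, with
   B(d_n,s) = 0; the solution is 2 - 2 (1/2)^(n-a). *)
Lemma form_ds a : (a <= n)%N -> Bf X (dd a) ss = 2 - 2 * (2^-1) ^+ (n - a).
Proof.
move=> ha; have -> : a = (n - (n - a))%N by lia.
move: (n - a)%N (leq_subr a n) => k; elim: k => [|k IH] hk.
  by rewrite subn0 subnn dd_root Bf0l expr0; lra.
have hlt : (n - k.+1 < n)%N by lia.
have := hX (balanced_dd (ltnW hlt)) balanced_ss.
rewrite LT_dd // LT_ss BfBl dot_ds // (_ : (n - k.+1).+1 = n - k)%N; last by lia.
rewrite IH; last by lia.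
rewrite !subKn; try lia.
have half : (2^-1 : R) * 2 = 1 by rewrite mulVf // pnatr_eq0.
rewrite exprS; set t := (2^-1) ^+ k => h.
have : 2^-1 * t * 2 = t by rewrite mulrAC half mul1r.
lra.
Qed.

(* (Lyap) on (d_a, d_b) gives
     2 B(d_a,d_b) - B(d_{a+1},d_b) - B(d_a,d_{b+1}) = 2 ([a = b] + 1),
   with B vanishing on d_n; by induction on (n - a) + (n - b) its solution is
   B(d_a,d_b) = 2 (n - max a b). *)
Lemma form_dd a b : (a <= n)%N -> (b <= n)%N ->
  Bf X (dd a) (dd b) = 2 * (n - maxn a b)%:R.
Proof.
move: {2}((n - a) + (n - b))%N (leqnn ((n - a) + (n - b))%N) => k.
elim: k a b => [|k IH] a b hk ha hb.
  have [-> ->] : a = n /\ b = n by lia.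
  by rewrite dd_root Bf0l maxnn subnn mulr0.
have [->|ha'] : a = n \/ (a < n)%N by lia.
  by rewrite dd_root Bf0l (maxn_idPl hb) subnn mulr0.
have [->|hb'] : b = n \/ (b < n)%N by lia.
  by rewrite dd_root Bf0r (maxn_idPr ha) subnn mulr0.
have := hX (balanced_dd ha) (balanced_dd hb).
rewrite LT_dd // LT_dd // BfBl BfBr dot_dd // (IH a.+1 b) ?(IH a b.+1); try lia.
have [hab|hab|<-] := ltngtP a b.
- have -> : maxn a.+1 b = b by lia.
  have -> : maxn a b.+1 = b.+1 by lia.
  have -> : (n - b = (n - b.+1).+1)%N by lia.
  by move: (n - b.+1)%N => t; rewrite -!natr1 /= => h; lra.
- have -> : maxn a.+1 b = a.+1 by lia.
  have -> : maxn a b.+1 = a by lia.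
  have -> : (n - a = (n - a.+1).+1)%N by lia.
  by move: (n - a.+1)%N => t; rewrite -!natr1 /= => h; lra.
- have -> : maxn a.+1 a = a.+1 by lia.
  have -> : maxn a a.+1 = a.+1 by lia.
  have -> : (n - a = (n - a.+1).+1)%N by lia.
  by move: (n - a.+1)%N => t; rewrite -!natr1 => h; lra.
Qed.

End TreeForm.

(* The form of any solution of (Lyap) for G^tree_{n,1} is symmetric on the
   vectors e_i - e_n: both it and its transpose take the values computed above. *)
Lemma tree_form_sym (R : realFieldType) n (X : 'M[R]_((n + 1).+1)) :
  lyap_identity (laplacian (tree_adj R n 1)) X ->
  forall i j : 'I_(n + 1).+1,
    Bf X (ev i - ev n) (ev j - ev n) = Bf X (ev j - ev n) (ev i - ev n).
Proof.
move=> hX; have hXT := lyap_identity_tr hX.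
have form_sd a : (a <= n)%N -> Bf X (dd R n a) (ss R n) = Bf X (ss R n) (dd R n a).
  by move=> ha; rewrite -[in RHS]Bf_tr !form_ds.
move=> [i hi] [j hj] /=.
have [hi'|->] : (i <= n)%N \/ i = n.+1 by lia.
  have [hj'|->] : (j <= n)%N \/ j = n.+1 by lia.
    by rewrite -!ddE !form_dd // maxnC.
  by rewrite -ssE -ddE form_sd.
have [hj'|->] : (j <= n)%N \/ j = n.+1 by lia.
  by rewrite -ssE -ddE form_sd.
by [].
Qed.

Theorem lemma6 (R : rcfType) (n : nat) (hn : (1 <= n)%N)
    (Q : 'M[R]_(n + 1, (n + 1).+1)) (Sigma : 'M[R]_(n + 1)) :
  proj_basis Q ->
  lyap_sol (red_laplacian Q (tree_adj R n 1)) Sigma ->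
  eff_res Q Sigma (leaf_k n 1) (leaf_j n 1)
    = 2 * (n%:R - 1) + 2 ^ (2 - n%:Z).
Proof.
move=> hQ hS; set X := Xmat Q Sigma.
have hX : lyap_identity (laplacian (tree_adj R n 1)) X := lyap_identity_of_sol hQ hS.
have XT : X^T = X := sym_of_sym_on_diffs hQ (Xmat_proj Sigma hQ) (tree_form_sym hX).
have leaves : ev (leaf_k n 1) - ev (leaf_j n 1) = dd R n 0 - ss R n :> 'cV_((n + 1).+1).
  by rewrite ddE ssE /= addn1 opprB addrA subrK.
rewrite /eff_res -/X eff_res_form // leaves !(BfBl, BfBr) -[Bf X (ss R n) _]Bf_tr.
rewrite form_dd // form_ds // (form_ds (lyap_identity_tr hX)) // form_ss //.
rewrite maxnn !subn0 expfzDr ?pnatr_eq0 // -exprnN -exprVn.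
have four : (2 : R) ^ (2 : int) = 2 * 2 by rewrite -exprnP expr2.
by rewrite four; lra.
Qed.
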